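(* Let $a,b,c\in\mathbb F$ and $d\in\mathbb N$. If the $\Re$-module $R_d(a,b,c)$ is irreducible, then it is isomorphic to each of $R_d(-a-1,b,c)$, $R_d(a,-b-1,c)$ and $R_d(a,b,-c-1)$.
   Context: $\mathbb F$ is algebraically closed with $\operatorname{char}\mathbb F\ne2$. The Racah algebra $\Re$ is the unital associative $\mathbb F$-algebra with generators $A,B,C,D$ and relations $[A,B]=[B,C]=[C,A]=2D$ together with the requirement that each of $\alpha:=[A,D]+AC-BA$, $\beta:=[B,D]+BA-CB$, $\gamma:=[C,D]+CB-AC$ is central in $\Re$; $\delta:=A+B+C$. For $a,b,c\in\mathbb F$ and $d\in\mathbb N$ set $\theta_i=(a+\tfrac d2-i)(a+\tfrac d2-i+1)$, $\theta_i^*=(b+\tfrac d2-i)(b+\tfrac d2-i+1)$, $\varphi_i=i(i-d-1)(a+b+c+\tfrac d2-i+2)(a+b-c+\tfrac d2-i+1)$. $R_d(a,b,c)$ denotes the $(d+1)$-dimensional $\Re$-module with a basis $v_0,\dots,v_d$ such that $Av_i=\theta_iv_i+v_{i+1}$ ($v_{d+1}=0$), $Bv_i=\theta_i^*v_i+\varphi_iv_{i-1}$ ($v_{-1}=0$), and $\alpha,\beta,\delta$ act as the scalars $(c-b)(c+b+1)(a-\tfrac d2)(a+\tfrac d2+1)$, $(a-c)(a+c+1)(b-\tfrac d2)(b+\tfrac d2+1)$, $\tfrac d2(\tfrac d2+1)+a(a+1)+b(b+1)+c(c+1)$ respectively (exists, unique up to isomorphism). *)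

From HB Require Import structures.
From mathcomp Require Import all_boot all_order all_algebra.
Set Implicit Arguments. Unset Strict Implicit. Unset Printing Implicit Defensive.
Import GRing.Theory.
Local Open Scope ring_scope.

(* Convention: matrices act on COLUMN vectors, i.e. the image of the
   basis vector v_j under X is the j-th column of X (X i j = coefficient
   of v_i in X v_j). Hence products of algebra elements correspond to
   products of matrices in the same order. *)
Record racah_rep (F : fieldType) (n : nat) := RacahRep {
  rA : 'M[F]_n; rB : 'M[F]_n; rC : 'M[F]_n; rD : 'M[F]_n }.

Definition mcomm (F : fieldType) n (X Y : 'M[F]_n) := X *m Y - Y *m X.

Definition is_racah_module (F : fieldType) n (M : racah_rep F n) : Prop :=
  let A := rA M in let B := rB M in let C := rC M in let D := rD M in
  let al := mcomm A D + A *m C - B *m A in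
  let be := mcomm B D + B *m A - C *m B in
  let ga := mcomm C D + C *m B - A *m C in
  [/\ mcomm A B = 2%:R *: D, mcomm B C = 2%:R *: D, mcomm C A = 2%:R *: D &
      forall Z, Z \in [:: al; be; ga] ->
        forall X, X \in [:: A; B; C; D] -> Z *m X = X *m Z].

Definition racah_iso (F : fieldType) n (M N : racah_rep F n) : Prop :=
  exists P : 'M[F]_n, P \in unitmx /\
    [/\ P *m rA M = rA N *m P, P *m rB M = rB N *m P,
        P *m rC M = rC N *m P & P *m rD M = rD N *m P].

(* A subspace W of column vectors is encoded by a matrix U whose rows span
   W^T; X W ⊆ W iff (U *m X^T <= U)%MS. *)
Definition racah_stable (F : fieldType) n (M : racah_rep F n) (U : 'M[F]_n) :=
  [/\ (U *m (rA M)^T <= U)%MS, (U *m (rB M)^T <= U)%MS,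
      (U *m (rC M)^T <= U)%MS & (U *m (rD M)^T <= U)%MS].

Definition racah_irreducible (F : fieldType) n (M : racah_rep F n) : Prop :=
  (0 < n)%N /\
  forall U : 'M[F]_n, racah_stable M U -> \rank U = 0%N \/ row_full U.

Section Rd.
Variables (F : fieldType) (a b c : F) (d : nat).

Definition half : F := 2%:R^-1.
Definition hd : F := d%:R * half.

Definition theta (i : nat) : F := (a + hd - i%:R) * (a + hd - i%:R + 1).
Definition thetas (i : nat) : F := (b + hd - i%:R) * (b + hd - i%:R + 1).
Definition phi (i : nat) : F :=
  i%:R * (i%:R - d%:R - 1) * (a + b + c + hd - i%:R + 2)
       * (a + b - c + hd - i%:R + 1).

(* scalar by which delta = A + B + C acts *)
Definition delta_sc : F := hd * (hd + 1) + a * (a + 1) + b * (b + 1) + c * (c + 1).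

(* A v_j = theta_j v_j + v_{j+1};  B v_j = theta*_j v_j + phi_j v_{j-1} *)
Definition RdA : 'M[F]_d.+1 :=
  \matrix_(i, j) ((if i == j :> nat then theta j else 0)
                  + (if i == j.+1 :> nat then 1 else 0)).
Definition RdB : 'M[F]_d.+1 :=
  \matrix_(i, j) ((if i == j :> nat then thetas j else 0)
                  + (if i.+1 == j :> nat then phi j else 0)).
Definition RdC : 'M[F]_d.+1 := delta_sc%:M - RdA - RdB.
Definition RdD : 'M[F]_d.+1 := half *: mcomm RdA RdB.

Definition Rd : racah_rep F d.+1 := RacahRep RdA RdB RdC RdD.
End Rd.

From Pilot Require Import Defs.
From HB Require Import structures.
From mathcomp Require Import all_boot all_order all_algebra.
From mathcomp Require Import ring zify.
Import GRing.Theory.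
Local Open Scope ring_scope.

Set Implicit Arguments.
Unset Strict Implicit.
Unset Printing Implicit Defensive.

(* A and B act on R_d(a,b,c) by a lower and an upper bidiagonal matrix, and
   the Racah relations give [A,[A,B]] = 2 (alpha - delta A + A^2 + AB + BA).
   Since theta_i(-a-1) = theta_(d-i)(a), applying the successive factors
   A - theta_i(-a-1) to the B-eigenvector v_0 gives a chain w_0, ..., w_d
   (w_(d+1) = 0 by Cayley-Hamilton) on which that relation forces B to act
   exactly as in R_d(-a-1,b,c).  The matrix with columns w_i is then a nonzero
   intertwiner R_d(-a-1,b,c) -> R_d(a,b,c); its image is a submodule, so it
   is invertible.  Exchanging the roles of A and B and starting from the
   A-eigenvector v_d gives intertwiners from one module into both
   R_d(a,b,c) and R_d(a,-b-1,c); composing one with the inverse of the other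
   yields a nonzero intertwiner R_d(a,b,c) -> R_d(a,-b-1,c), invertible
   because its kernel is a submodule.  Finally phi_i is invariant under
   c |-> -c-1, so R_d(a,b,-c-1) and R_d(a,b,c) coincide. *)

Lemma mulmxZ (R : comPzSemiRingType) m n p (a : R) (A : 'M[R]_(m, n))
    (B : 'M[R]_(n, p)) :
  A *m (a *: B) = a *: (A *m B).
Proof. by rewrite scalemxAr. Qed.

Section Bidiagonal.
Variables (F : fieldType) (n : nat).

Definition bcv (j : nat) : 'cV[F]_n.+1 := \col_i ((i : nat) == j)%:R.

Lemma bcv_neq0 j : (j < n.+1)%N -> bcv j != 0.
Proof.
move=> lt_jn; apply/eqP => /matrixP/(_ (inord j) 0).
by rewrite !mxE inordK // eqxx => /eqP; rewrite oner_eq0.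
Qed.

Lemma bcv_out j : (n.+1 <= j)%N -> bcv j = 0.
Proof.
move=> le_nj; apply/matrixP => i k; rewrite !mxE ltn_eqF //.
exact: leq_trans (ltn_ord i) le_nj.
Qed.

Lemma mulmx_bcvE (M : 'M[F]_n.+1) j i :
  (M *m bcv j) i 0 = if (j < n.+1)%N then M i (inord j) else 0.
Proof.
rewrite mxE; case: ltnP => [lt_jn|le_nj]; last first.
  rewrite big1 // => k _; rewrite mxE ltn_eqF ?mulr0 //.
  exact: leq_trans (ltn_ord k) le_nj.
rewrite (bigD1 (inord j)) //= big1 ?addr0 => [|k neq_kj].
  by rewrite mxE inordK // eqxx mulr1.
rewrite mxE; case: eqP => [eq_kj|]; last by rewrite mulr0.
by case/eqP: neq_kj; apply: val_inj; rewrite /= inordK // -eq_kj.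
Qed.

Lemma mx_bcv_inj (M N : 'M[F]_n.+1) :
  (forall j, (j < n.+1)%N -> M *m bcv j = N *m bcv j) -> M = N.
Proof.
move=> eqMN; apply/matrixP => r s.
have /matrixP/(_ r 0) := eqMN s (ltn_ord s).
by rewrite !mulmx_bcvE ltn_ord inord_val.
Qed.

Definition lbidiag (lam : nat -> F) : 'M[F]_n.+1 :=
  \matrix_(i, j) ((if i == j :> nat then lam j else 0)
                  + (if i == j.+1 :> nat then 1 else 0)).

Definition ubidiag (mu ph : nat -> F) : 'M[F]_n.+1 :=
  \matrix_(i, j) ((if i == j :> nat then mu j else 0)
                  + (if i.+1 == j :> nat then ph j else 0)).

Lemma lbidiag_bcv lam j : lbidiag lam *m bcv j = lam j *: bcv j + bcv j.+1.
Proof.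
apply/matrixP => i k; rewrite (ord1 k) mulmx_bcvE !mxE.
case: ltnP => [lt_jn|le_nj].
  rewrite inordK //.
  by case: eqP => _; case: eqP => _; rewrite ?mulr0 ?mulr1 ?addr0 ?add0r.
have le_ij : (i < j)%N by exact: leq_trans (ltn_ord i) le_nj.
by rewrite !ltn_eqF ?mulr0 ?addr0 // ltnW.
Qed.

(* [ph 0] and [ph n.+1] are the entries that fall outside the matrix. *)
Lemma ubidiag_bcv mu ph j : ph 0%N = 0 -> ph n.+1 = 0 ->
  ubidiag mu ph *m bcv j = mu j *: bcv j + ph j *: bcv j.-1.
Proof.
move=> ph0 phn; apply/matrixP => i k; rewrite (ord1 k) mulmx_bcvE !mxE.
case: ltnP => [lt_jn|le_nj].
  rewrite inordK //; case: j lt_jn => [|j] _ /=.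
    by rewrite ph0 mul0r; case: eqP; rewrite ?mulr0 ?mulr1.
  rewrite eqSS.
  by case: eqP => _; case: eqP => _; rewrite ?mulr0 ?mulr1 ?addr0 ?add0r.
rewrite ltn_eqF ?mulr0 ?add0r; last exact: leq_trans (ltn_ord i) le_nj.
case: (ltngtP j n.+1) le_nj => // [lt_nj|->] _; last by rewrite phn mul0r.
by case: j lt_nj => // j lt_nj; rewrite ltn_eqF ?mulr0 // (leq_trans (ltn_ord i)).
Qed.

Lemma char_poly_trmx (M : 'M[F]_n.+1) : char_poly M^T = char_poly M.
Proof.
rewrite /char_poly /char_poly_mx -det_tr; congr (\det _).
by rewrite linearB /= tr_scalar_mx -map_trmx trmxK.
Qed.

Lemma char_poly_lbidiag lam :
  char_poly (lbidiag lam) = \prod_(i < n.+1) ('X - (lam i)%:P).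
Proof.
rewrite char_poly_trig; last first.
  by apply/is_trig_mxP => i j lt_ij; rewrite mxE !ltn_eqF ?addr0 // ltnW.
by apply: eq_bigr => i _; rewrite mxE eqxx eqn_leq ltnn andbF addr0.
Qed.

Lemma char_poly_ubidiag mu ph :
  char_poly (ubidiag mu ph) = \prod_(i < n.+1) ('X - (mu i)%:P).
Proof.
rewrite -char_poly_trmx char_poly_trig; last first.
  by apply/is_trig_mxP => i j lt_ij; rewrite !mxE !gtn_eqF ?addr0 // ltnS ltnW.
by apply: eq_bigr => i _; rewrite !mxE eqxx gtn_eqF ?addr0.
Qed.

Lemma prod_XsubC_rev (f g : nat -> F) :
  (forall i, (i <= n)%N -> f i = g (n - i)%N) ->
  \prod_(i < n.+1) ('X - (f i)%:P) = \prod_(i < n.+1) ('X - (g i)%:P).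
Proof.
move=> eq_fg; rewrite (reindex_inj rev_ord_inj) /=.
apply: eq_bigr => i _; rewrite eq_fg /= subSS ?leq_subr //.
by rewrite subKn // -ltnS.
Qed.

End Bidiagonal.

Arguments bcv {F n}.

Section Chain.
Variables (F : fieldType) (n : nat).
Variables (X : 'M[F]_n.+1) (lam : nat -> F) (w : 'cV[F]_n.+1).

Fixpoint chain (i : nat) : 'cV[F]_n.+1 :=
  if i is i'.+1 then X *m chain i' - lam i' *: chain i' else w.

Lemma mulmx_chain i : X *m chain i = lam i *: chain i + chain i.+1.
Proof. by rewrite /= addrC subrK. Qed.

Lemma chain_horner i :
  chain i = horner_mx X (\prod_(k < i) ('X - (lam k)%:P)) *m w.
Proof.
elim: i => [|i IHi] /=; first by rewrite big_ord0 rmorph1 mul1mx.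
rewrite big_ord_recr /= mulrC rmorphM rmorphB /= horner_mx_X horner_mx_C.
by rewrite -mulmxE -mulmxA -IHi mulmxBl mul_scalar_mx.
Qed.

Lemma chain_end_eq0 : char_poly X = \prod_(k < n.+1) ('X - (lam k)%:P) ->
  chain n.+1 = 0.
Proof. by move=> charX; rewrite chain_horner -charX Cayley_Hamilton mul0mx. Qed.

Definition chain_mx : 'M[F]_n.+1 := \matrix_(i, j) chain j i 0.

Lemma chain_mx_bcv j : chain_mx *m bcv j = if (j < n.+1)%N then chain j else 0.
Proof.
apply/matrixP => i k; rewrite (ord1 k) mulmx_bcvE.
by case: ltnP => lt_jn; rewrite ?mxE ?inordK.
Qed.

Lemma chain_mx_neq0 : w != 0 -> chain_mx != 0.
Proof.
by apply: contraNneq => Q0; have := chain_mx_bcv 0; rewrite Q0 mul0mx /= => <-.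
Qed.

Lemma chain_mx_lbidiag :
  chain n.+1 = 0 -> chain_mx *m lbidiag n lam = X *m chain_mx.
Proof.
move=> chain_end; apply: mx_bcv_inj => j lt_jn.
rewrite -!mulmxA lbidiag_bcv mulmxDr -scalemxAr !chain_mx_bcv lt_jn mulmx_chain.
case: ltnP => // le_nj.
have -> : j.+1 = n.+1 by apply/eqP; rewrite eqn_leq le_nj andbT.
by rewrite chain_end.
Qed.

Lemma chain_mx_ubidiag (Y : 'M[F]_n.+1) mu ph : ph 0%N = 0 -> ph n.+1 = 0 ->
  (forall i, Y *m chain i = mu i *: chain i + ph i *: chain i.-1) ->
  chain_mx *m ubidiag n mu ph = Y *m chain_mx.
Proof.
move=> ph0 phn Ychain; apply: mx_bcv_inj => j lt_jn.
rewrite -!mulmxA ubidiag_bcv // mulmxDr -!scalemxAr !chain_mx_bcv lt_jn Ychain.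
by rewrite (leq_ltn_trans (leq_pred j) lt_jn).
Qed.

End Chain.

Section TridiagonalRelation.
Variables (F : fieldType) (n : nat).

Definition tridiag_rel (X Y : 'M[F]_n.+1) (ka de : F) : Prop :=
  mcomm X (mcomm X Y) = 2%:R *: (ka%:M - de *: X + X *m X + X *m Y + Y *m X).

Lemma tridiag_rel_mulmxE (X Y : 'M[F]_n.+1) (ka de : F) (v : 'cV[F]_n.+1) :
  (mcomm X (mcomm X Y) *m v
     = 2%:R *: (ka%:M - de *: X + X *m X + X *m Y + Y *m X) *m v)
  = (X *m (X *m (Y *m v)) - X *m (Y *m (X *m v))
       - (X *m (Y *m (X *m v)) - Y *m (X *m (X *m v)))
     = 2%:R *: (ka *: v - de *: (X *m v) + X *m (X *m v)
                + X *m (Y *m v) + Y *m (X *m v))).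
Proof.
rewrite /mcomm -scalemxAl !(mulmxBl, mulmxDl, mulmxBr, mulmxDr, mulNmx, mulmxN).
by rewrite -scalemxAl mul_scalar_mx -!mulmxA.
Qed.

Lemma eq_by_combination (x y p q z : F) :
  p = q -> z = 0 -> x - y = (p - q) - z -> x = y.
Proof.
by move=> eq_pq z0 eq_xy; apply/eqP; rewrite -subr_eq0 eq_xy eq_pq z0 !subrr.
Qed.

(* The coefficients of [w3], [w2], [w1], [w0] that appear when the relation
   is applied to [w1] and [Y *m w3] is eliminated. *)
Definition tridiag_coefs (ka de l0 l1 l2 m1 m2 m3 f1 f2 f3 : F) : Prop :=
  [/\ m1 - 2%:R * m2 + m3 - 2%:R = 0,
      (m1 - m2) * (l2 - l1) + f1 - 2%:R * f2 + f3
        - 2%:R * (m1 + m2) + 2%:R * de - 2%:R * (l1 + l2) = 0,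
      f1 * (l0 - l1 - 2%:R) + f2 * (l2 - l1 - 2%:R) - 4%:R * m1 * l1
        - 2%:R * ka + 2%:R * de * l1 - 2%:R * l1 ^+ 2 = 0 &
      f1 * ((l0 - l1) ^+ 2 - 2%:R * (l0 + l1)) = 0].

Lemma tridiag_rel_step (X Y : 'M[F]_n.+1) (w0 w1 w2 w3 : 'cV[F]_n.+1)
    (ka de l0 l1 l2 m1 m2 m3 f1 f2 f3 : F) :
  tridiag_rel X Y ka de -> tridiag_coefs ka de l0 l1 l2 m1 m2 m3 f1 f2 f3 ->
  (* The first alternative covers the start of a chain, which has no [w0]. *)
  (f1 = 0 \/ X *m w0 = l0 *: w0 + w1) ->
  X *m w1 = l1 *: w1 + w2 -> X *m w2 = l2 *: w2 + w3 ->
  Y *m w1 = m1 *: w1 + f1 *: w0 -> Y *m w2 = m2 *: w2 + f2 *: w1 ->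
  Y *m w3 = m3 *: w3 + f3 *: w2.
Proof.
move=> rel [cT cS cQ cP] Xw0 Xw1 Xw2 Yw1 Yw2.
have := congr1 (mulmx^~ w1) rel; rewrite tridiag_rel_mulmxE => E.
pose coefs r := (m1 - 2%:R * m2 + m3 - 2%:R) * w3 r 0
  + ((m1 - m2) * (l2 - l1) + f1 - 2%:R * f2 + f3
       - 2%:R * (m1 + m2) + 2%:R * de - 2%:R * (l1 + l2)) * w2 r 0
  + (f1 * (l0 - l1 - 2%:R) + f2 * (l2 - l1 - 2%:R) - 4%:R * m1 * l1
       - 2%:R * ka + 2%:R * de * l1 - 2%:R * l1 ^+ 2) * w1 r 0
  + f1 * ((l0 - l1) ^+ 2 - 2%:R * (l0 + l1)) * w0 r 0.
have coefs0 r : coefs r = 0 by rewrite /coefs cT cS cQ cP !mul0r !addr0.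
apply/matrixP => r s; rewrite (ord1 s) !mxE.
case: Xw0 => [f1_0|Xw0].
  rewrite f1_0 scale0r addr0 in Yw1.
  rewrite ?(mulmxDr, mulmxBr, mulmxZ, Xw1, Xw2, Yw1, Yw2) /= in E.
  have /matrixP/(_ r 0) := E; rewrite !mxE => Er.
  by apply: (eq_by_combination Er (coefs0 r)); rewrite /coefs f1_0; ring.
rewrite ?(mulmxDr, mulmxBr, mulmxZ, Xw0, Xw1, Xw2, Yw1, Yw2) /= in E.
have /matrixP/(_ r 0) := E; rewrite !mxE => Er.
by apply: (eq_by_combination Er (coefs0 r)); rewrite /coefs; ring.
Qed.

Lemma tridiag_rel_chain (X Y : 'M[F]_n.+1) (lam mu ph : nat -> F) (ka de : F)
    (w : 'cV[F]_n.+1) :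
  tridiag_rel X Y ka de ->
  (forall k, tridiag_coefs ka de (lam k.-1) (lam k) (lam k.+1)
               (mu k) (mu k.+1) (mu k.+2) (ph k) (ph k.+1) (ph k.+2)) ->
  ph 0%N = 0 -> Y *m w = mu 0%N *: w ->
  Y *m chain X lam w 1 = mu 1%N *: chain X lam w 1 + ph 1%N *: w ->
  forall i, Y *m chain X lam w i
            = mu i *: chain X lam w i + ph i *: chain X lam w i.-1.
Proof.
move=> rel coefs ph0 Yw Yw1; set W := chain X lam w.
suff Ychain2 k : Y *m W k = mu k *: W k + ph k *: W k.-1 /\
                 Y *m W k.+1 = mu k.+1 *: W k.+1 + ph k.+1 *: W k.
  by move=> i; case: (Ychain2 i).
elim: k => [|k [IHk IHk1]]; first by rewrite /= ph0 scale0r addr0.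
split=> //; apply: tridiag_rel_step rel (coefs k) _ _ _ IHk IHk1;
  try exact: mulmx_chain.
by case: k => [|k]; [left | right; exact: mulmx_chain].
Qed.

End TridiagonalRelation.

Section RacahParameters.
Variable F : fieldType.
Hypothesis two_neq0 : (2%:R : F) != 0.
Variable d : nat.

Definition alpha_sc (a b c : F) : F :=
  (c - b) * (c + b + 1) * (a - hd F d) * (a + hd F d + 1).
Definition beta_sc (a b c : F) : F :=
  (a - c) * (a + c + 1) * (b - hd F d) * (b + hd F d + 1).

Lemma RdA_lbidiag (a : F) : RdA a d = lbidiag d (theta a d).
Proof. by []. Qed.

Lemma RdB_ubidiag (a b c : F) : RdB a b c d = ubidiag d (theta b d) (phi a b c d).
Proof. by []. Qed.

Lemma phi0 (a b c : F) : phi a b c d 0 = 0.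
Proof. by rewrite /phi !mul0r. Qed.

Lemma phiSd (a b c : F) : phi a b c d d.+1 = 0.
Proof.
by rewrite /phi (_ : d.+1%:R - d%:R - 1 = 0 :> F) ?mulr0 ?mul0r //; ring.
Qed.

Lemma theta_opp (a : F) i : (i <= d)%N -> theta (- a - 1) d i = theta a d (d - i).
Proof.
by move=> le_id; rewrite /theta natrB // /hd /Defs.half; field.
Qed.

Lemma prod_theta_opp (a : F) :
  \prod_(i < d.+1) ('X - (theta (- a - 1) d i)%:P)
  = \prod_(i < d.+1) ('X - (theta a d i)%:P).
Proof. exact: prod_XsubC_rev (theta_opp a). Qed.

Lemma Rd_tridiag_relA (a b c : F) :
  tridiag_rel (RdA a d) (RdB a b c d) (alpha_sc a b c) (delta_sc a b c d).
Proof.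
apply: mx_bcv_inj => j _; rewrite tridiag_rel_mulmxE RdA_lbidiag RdB_ubidiag.
rewrite ?(mulmxDr, mulmxBr, mulmxZ, lbidiag_bcv,
          ubidiag_bcv _ _ (phi0 a b c) (phiSd a b c)).
apply/matrixP => r s; rewrite !mxE.
case: j => [|j] /=; rewrite ?phi0;
  by rewrite /alpha_sc /delta_sc /theta /phi /hd /Defs.half; field.
Qed.

Lemma Rd_tridiag_relB (a b c : F) :
  tridiag_rel (RdB a b c d) (RdA a d) (- beta_sc a b c) (delta_sc a b c d).
Proof.
apply: mx_bcv_inj => j _; rewrite tridiag_rel_mulmxE RdA_lbidiag RdB_ubidiag.
rewrite ?(mulmxDr, mulmxBr, mulmxZ, lbidiag_bcv,
          ubidiag_bcv _ _ (phi0 a b c) (phiSd a b c)).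
apply/matrixP => r s; rewrite !mxE.
case: j => [|[|j]] /=; rewrite ?phi0;
  by rewrite /beta_sc /delta_sc /theta /phi /hd /Defs.half; field.
Qed.

Lemma Rd_tridiag_coefs (p y z : F) k :
  tridiag_coefs (alpha_sc (- p - 1) y z) (delta_sc (- p - 1) y z d)
    (theta p d k.-1) (theta p d k) (theta p d k.+1)
    (theta y d k) (theta y d k.+1) (theta y d k.+2)
    (phi p y z d k) (phi p y z d k.+1) (phi p y z d k.+2).
Proof.
split; case: k => [|k] /=; rewrite ?phi0;
  by rewrite /alpha_sc /delta_sc /theta /phi /hd /Defs.half; field.
Qed.

Lemma Rd_chain_intertwiner (p y z : F) (X Y : 'M[F]_d.+1) (w : 'cV[F]_d.+1) :
  tridiag_rel X Y (alpha_sc (- p - 1) y z) (delta_sc (- p - 1) y z d) ->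
  char_poly X = \prod_(i < d.+1) ('X - (theta p d i)%:P) ->
  Y *m w = theta y d 0 *: w ->
  Y *m chain X (theta p d) w 1
    = theta y d 1 *: chain X (theta p d) w 1 + phi p y z d 1 *: w ->
  chain_mx X (theta p d) w *m RdA p d = X *m chain_mx X (theta p d) w /\
  chain_mx X (theta p d) w *m RdB p y z d = Y *m chain_mx X (theta p d) w.
Proof.
move=> rel charX Yw Yw1; split.
  by rewrite RdA_lbidiag; apply/chain_mx_lbidiag/chain_end_eq0.
rewrite RdB_ubidiag; apply: chain_mx_ubidiag (phi0 _ _ _) (phiSd _ _ _) _.
exact: tridiag_rel_chain rel (Rd_tridiag_coefs p y z) (phi0 _ _ _) Yw Yw1.
Qed.

End RacahParameters.

Section Intertwiners.
Variable F : fieldType.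

Lemma submxB m1 m2 n (A B : 'M[F]_(m1, n)) (C : 'M[F]_(m2, n)) :
  (A <= C)%MS -> (B <= C)%MS -> (A - B <= C)%MS.
Proof. by move=> sAC sBC; rewrite -scaleN1r addmx_sub // scalemx_sub. Qed.

Lemma Rd_stable (a b c : F) d (U : 'M[F]_d.+1) :
  (U *m (RdA a d)^T <= U)%MS -> (U *m (RdB a b c d)^T <= U)%MS ->
  racah_stable (Rd a b c d) U.
Proof.
move=> sUA sUB; split => //=.
  rewrite /RdC !linearB /= tr_scalar_mx mul_mx_scalar.
  by rewrite !submxB // scalemx_sub.
rewrite /RdD /mcomm linearZ linearB /= !trmx_mul mulmxZ mulmxBr !mulmxA.
apply/scalemx_sub/submxB.
  exact: submx_trans (submxMr _ sUB) sUA.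
exact: submx_trans (submxMr _ sUA) sUB.
Qed.

Lemma intertwine_image_stable n (P Xm Xn : 'M[F]_n) :
  P *m Xm = Xn *m P -> (P^T *m Xn^T <= P^T)%MS.
Proof. by move=> PX; rewrite -trmx_mul -PX trmx_mul submxMl. Qed.

Lemma intertwine_kernel_stable n (P Xm Xn : 'M[F]_n) :
  P *m Xm = Xn *m P -> (kermx P^T *m Xm^T <= kermx P^T)%MS.
Proof.
move=> PX; rewrite sub_kermx -mulmxA -trmx_mul PX trmx_mul mulmxA.
by rewrite mulmx_ker mul0mx.
Qed.

Lemma irreducible_image_unitmx n (M : racah_rep F n) (Q : 'M[F]_n) :
  racah_irreducible M -> Q != 0 -> racah_stable M Q^T -> Q \in unitmx.
Proof.
case=> _ irrM Q_neq0 /irrM[/eqP|]; last by rewrite -unitmx_tr -row_full_unit.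
by rewrite mxrank_tr mxrank_eq0 (negbTE Q_neq0).
Qed.

Lemma irreducible_kernel_unitmx n (M : racah_rep F n) (P : 'M[F]_n) :
  racah_irreducible M -> P != 0 -> racah_stable M (kermx P^T) -> P \in unitmx.
Proof.
case=> n_gt0 irrM P_neq0 /irrM[|]; rewrite /row_full mxrank_ker mxrank_tr.
  move/eqP; rewrite subn_eq0 => le_n_rank.
  by rewrite -row_full_unit /row_full eqn_leq rank_leq_col.
move/eqP => rank_eq; have/eqP : \rank P = 0%N by have := rank_leq_row P; lia.
by rewrite mxrank_eq0 (negbTE P_neq0).
Qed.

Lemma Rd_intertwiner_to_unitmx (a b c : F) d (Q XA XB : 'M[F]_d.+1) :
  racah_irreducible (Rd a b c d) -> Q != 0 ->
  Q *m XA = RdA a d *m Q -> Q *m XB = RdB a b c d *m Q -> Q \in unitmx.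
Proof.
move=> irr Q_neq0 QA QB; apply: irreducible_image_unitmx irr Q_neq0 _.
exact: Rd_stable (intertwine_image_stable QA) (intertwine_image_stable QB).
Qed.

Lemma Rd_intertwiner_from_unitmx (a b c : F) d (P XA XB : 'M[F]_d.+1) :
  racah_irreducible (Rd a b c d) -> P != 0 ->
  P *m RdA a d = XA *m P -> P *m RdB a b c d = XB *m P -> P \in unitmx.
Proof.
move=> irr P_neq0 PA PB; apply: irreducible_kernel_unitmx irr P_neq0 _.
exact: Rd_stable (intertwine_kernel_stable PA) (intertwine_kernel_stable PB).
Qed.

Lemma invmx_intertwine n (Q Xm Xn : 'M[F]_n) : Q \in unitmx ->
  Q *m Xm = Xn *m Q -> invmx Q *m Xn = Xm *m invmx Q.
Proof.
move=> Q_unit QX.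
rewrite -[invmx Q *m Xn]mulmx1 -(mulmxV Q_unit) !mulmxA -(mulmxA _ Xn) -QX.
by rewrite mulmxA mulVmx // mul1mx.
Qed.

(* [C] and [D] are determined by [A], [B] and the scalar [delta]. *)
Lemma Rd_iso (a b c a' b' c' : F) d (P : 'M[F]_d.+1) :
  P \in unitmx -> P *m RdA a d = RdA a' d *m P ->
  P *m RdB a b c d = RdB a' b' c' d *m P ->
  delta_sc a b c d = delta_sc a' b' c' d ->
  racah_iso (Rd a b c d) (Rd a' b' c' d).
Proof.
move=> P_unit PA PB eq_delta; exists P; split=> //; split => //=.
  by rewrite /RdC !mulmxBr !mulmxBl mul_mx_scalar mul_scalar_mx PA PB eq_delta.
rewrite /RdD /mcomm mulmxZ -scalemxAl mulmxBr mulmxBl.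
by rewrite !mulmxA PA -!mulmxA PB !mulmxA PB -!mulmxA PA.
Qed.

End Intertwiners.

Section Isomorphisms.
Variable F : fieldType.
Hypothesis two_neq0 : (2%:R : F) != 0.

Lemma Rd_opp_a_intertwiner (a b c : F) d : exists Q : 'M[F]_d.+1,
  [/\ Q != 0, Q *m RdA (- a - 1) d = RdA a d *m Q
            & Q *m RdB (- a - 1) b c d = RdB a b c d *m Q].
Proof.
pose Q := chain_mx (RdA a d) (theta (- a - 1) d) (bcv 0).
suff [QA QB] : Q *m RdA (- a - 1) d = RdA a d *m Q /\
               Q *m RdB (- a - 1) b c d = RdB a b c d *m Q.
  by exists Q; split=> //; exact: chain_mx_neq0 _ _ (bcv_neq0 _ (ltn0Sn d)).
apply: Rd_chain_intertwiner => //.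
- by rewrite (_ : - (- a - 1) - 1 = a); [exact: Rd_tridiag_relA | ring].
- by rewrite RdA_lbidiag char_poly_lbidiag prod_theta_opp.
- by rewrite RdB_ubidiag ubidiag_bcv ?phi0 ?phiSd // scale0r addr0.
rewrite /= RdA_lbidiag RdB_ubidiag mulmxBr lbidiag_bcv.
rewrite ?(mulmxDr, mulmxZ, ubidiag_bcv _ _ (phi0 _ _ _ _) (phiSd _ _ _ _)) /=.
apply/matrixP => r s; rewrite !mxE.
by rewrite /theta /phi /hd /Defs.half; field.
Qed.

Lemma Rd_swap_intertwiner (a b b' c : F) d : b' = b \/ b' = - b - 1 ->
  exists Q : 'M[F]_d.+1,
  [/\ Q != 0, Q *m RdB b (- a - 1) c d = RdA a d *m Q
            & Q *m RdA b d = RdB a b' c d *m Q].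
Proof.
move=> b'E; pose Q := chain_mx (RdB a b' c d) (theta b d) (bcv d).
suff [QB QA] : Q *m RdA b d = RdB a b' c d *m Q /\
               Q *m RdB b (- a - 1) c d = RdA a d *m Q.
  by exists Q; split=> //; exact: chain_mx_neq0 _ _ (bcv_neq0 _ (ltnSn d)).
apply: Rd_chain_intertwiner => //.
- have -> : alpha_sc d (- b - 1) (- a - 1) c = - beta_sc d a b' c.
    by case: b'E => ->; rewrite /alpha_sc /beta_sc; ring.
  have -> : delta_sc (- b - 1) (- a - 1) c d = delta_sc a b' c d.
    by case: b'E => ->; rewrite /delta_sc; ring.
  exact: Rd_tridiag_relB.
- rewrite RdB_ubidiag char_poly_ubidiag.
  by case: b'E => -> //; rewrite prod_theta_opp.
- rewrite RdA_lbidiag lbidiag_bcv [bcv d.+1]bcv_out // addr0.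
  by rewrite theta_opp // subn0.
rewrite /= RdA_lbidiag RdB_ubidiag mulmxBr ubidiag_bcv ?phi0 ?phiSd //.
rewrite ?(mulmxDr, mulmxZ, lbidiag_bcv) [bcv d.+1]bcv_out // ?addr0.
apply/matrixP => r s; rewrite !mxE.
case: d {Q} r => [|d] r /=; rewrite ?phi0;
  by case: b'E => ->; rewrite /theta /phi /hd /Defs.half; field.
Qed.

Lemma Rd_iso_opp_a (a b c : F) d : racah_irreducible (Rd a b c d) ->
  racah_iso (Rd a b c d) (Rd (- a - 1) b c d).
Proof.
move=> irr; have [Q [Q_neq0 QA QB]] := Rd_opp_a_intertwiner a b c d.
have Q_unit := Rd_intertwiner_to_unitmx irr Q_neq0 QA QB.
apply: Rd_iso (invmx_intertwine Q_unit QA) (invmx_intertwine Q_unit QB) _.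
  by rewrite unitmx_inv.
by rewrite /delta_sc; ring.
Qed.

Lemma Rd_iso_opp_b (a b c : F) d : racah_irreducible (Rd a b c d) ->
  racah_iso (Rd a b c d) (Rd a (- b - 1) c d).
Proof.
move=> irr.
have [Q1 [Q1_neq0 Q1A Q1B]] := Rd_swap_intertwiner a c d (or_introl (erefl b)).
have [Q2 [Q2_neq0 Q2A Q2B]] :=
  Rd_swap_intertwiner a c d (or_intror (erefl (- b - 1))).
have Q1_unit := Rd_intertwiner_to_unitmx irr Q1_neq0 Q1A Q1B.
pose P := Q2 *m invmx Q1.
have PA : P *m RdA a d = RdA a d *m P.
  by rewrite -mulmxA (invmx_intertwine Q1_unit Q1A) mulmxA Q2A mulmxA.
have PB : P *m RdB a b c d = RdB a (- b - 1) c d *m P.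
  by rewrite -mulmxA (invmx_intertwine Q1_unit Q1B) mulmxA Q2B mulmxA.
have P_neq0 : P != 0.
  apply: contraNneq Q2_neq0 => P0.
  by rewrite -(mulmxKV Q1_unit Q2) -/P P0 mul0mx.
apply: Rd_iso (Rd_intertwiner_from_unitmx irr P_neq0 PA PB) PA PB _.
by rewrite /delta_sc; ring.
Qed.

Lemma RdB_opp_c (a b c : F) d : RdB a b (- c - 1) d = RdB a b c d.
Proof.
apply/matrixP => i j; rewrite !mxE; congr (_ + _).
by case: eqP => // _; rewrite /phi; ring.
Qed.

Lemma Rd_iso_opp_c (a b c : F) d :
  racah_iso (Rd a b c d) (Rd a b (- c - 1) d).
Proof.
apply: Rd_iso (unitmx1 _ _) _ _ _; rewrite ?mul1mx ?mulmx1 ?RdB_opp_c //.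
by rewrite /delta_sc; ring.
Qed.

End Isomorphisms.

Theorem theorem5p3 (F : closedFieldType) (char2 : (2%:R : F) != 0)
    (a b c : F) (d : nat) :
  racah_irreducible (Rd a b c d) ->
  [/\ racah_iso (Rd a b c d) (Rd (- a - 1) b c d),
      racah_iso (Rd a b c d) (Rd a (- b - 1) c d) &
      racah_iso (Rd a b c d) (Rd a b (- c - 1) d)].
Proof.
move=> irr; split.
- exact: Rd_iso_opp_a char2 _ _ _ _ irr.
- exact: Rd_iso_opp_b char2 _ _ _ _ irr.
- exact: Rd_iso_opp_c.
Qed.
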